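(* Let $\eta(0)\in\Omega$. Then the vector $B_L\Gamma\sin(\eta)$ is a conserved quantity of the dynamical system $\dot\eta=B_S^T(\eta)\omega_G$, $M\dot\omega_G=-A\omega_G-B_G\Gamma\sin(\eta)+u$ over the interval of existence of the solution.
   Context: A power network is modeled on a connected undirected graph with $n$ nodes and $m$ edges, nodes partitioned into $n_g$ generator and $n_\ell$ load nodes. $B$ is an incidence matrix partitioned row-wise as $B=\begin{bmatrix}B_G^T & B_L^T\end{bmatrix}^T$ (generator rows, load rows). $\Gamma=\mathrm{diag}(\gamma_k)$ is positive definite, $M,A$ are positive definite diagonal, $u\in\mathbb{R}^{n_g}$. $\sin,\cos$ act elementwise, $\Omega=(-\frac{\pi}{2},\frac{\pi}{2})^m$, $\Gamma'(\eta)=\Gamma\,\mathrm{diag}(\cos(\eta_k))$, and $B_S(\eta)=B_G\big(I-\Gamma'(\eta)B_L^T(B_L\Gamma'(\eta)B_L^T)^{-1}B_L\big)$. The state is $(\eta,\omega_G)\in\operatorname{im}B^T\times\mathbb{R}^{n_g}$. *)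

From HB Require Import structures.
From mathcomp Require Import all_boot all_order all_algebra.
From mathcomp Require Import all_classical all_reals all_analysis.
Set Implicit Arguments. Unset Strict Implicit. Unset Printing Implicit Defensive.
Import Order.TTheory GRing.Theory Num.Theory.
Local Open Scope ring_scope.

(* A graph on nodes 'I_n with edges 'I_m; edge e goes (with an arbitrary
   fixed orientation) from src e to tgt e. *)
Definition incidence (R : pzRingType) (n m : nat) (src tgt : 'I_m -> 'I_n)
  : 'M[R]_(n, m) :=
  \matrix_(i, e) ((i == src e)%:R - (i == tgt e)%:R).

Definition graph_adj (n m : nat) (src tgt : 'I_m -> 'I_n) : rel 'I_n :=
  fun i j => [exists e, ((src e == i) && (tgt e == j))
                      || ((src e == j) && (tgt e == i))].

Definition graph_connected (n m : nat) (src tgt : 'I_m -> 'I_n) : Prop :=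
  (forall e, src e != tgt e) /\ (forall i j, connect (graph_adj src tgt) i j).

Definition sinv (R : realType) (m : nat) (x : 'cV[R]_m) : 'cV[R]_m :=
  map_mx (@sin R) x.

Definition in_Omega (R : realType) (m : nat) (x : 'cV[R]_m) : Prop :=
  forall k, - (pi / 2) < x k 0 < pi / 2.

Definition in_imBT (R : realType) (n m : nat) (B : 'M[R]_(n, m)) (x : 'cV[R]_m)
  : Prop := exists y : 'cV[R]_n, x = B^T *m y.

Definition Gammap (R : realType) (m : nat) (gamma : 'rV[R]_m) (eta : 'cV[R]_m)
  : 'M[R]_m :=
  diag_mx gamma *m diag_mx (\row_k cos (eta k 0)).

Definition B_S (R : realType) (ng nl m : nat) (BG : 'M[R]_(ng, m))
  (BL : 'M[R]_(nl, m)) (gamma : 'rV[R]_m) (eta : 'cV[R]_m) : 'M[R]_(ng, m) :=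
  let G := Gammap gamma eta in
  BG *m (1%:M - G *m BL^T *m invmx (BL *m G *m BL^T) *m BL).

From HB Require Import structures.
From mathcomp Require Import all_boot all_order all_algebra.
From mathcomp Require Import all_classical all_reals all_analysis.
From mathcomp Require Import ring.
Set Implicit Arguments. Unset Strict Implicit. Unset Printing Implicit Defensive.
Import Order.TTheory GRing.Theory Num.Theory numFieldNormedType.Exports.
Local Open Scope ring_scope.
Local Open Scope classical_set_scope.

(* Along a solution, the [j]-th entry of [B_L Gamma sin(eta)] has derivative
   [(B_L Gamma'(eta) B_S(eta)^T omega_G)_j].  Writing [W = Gamma'(eta)] (diagonal,
   positive on Omega) and [X = B_L W B_L^T], the transpose of [B_S] is
   [(1 - B_L^T X^-1 B_L W) B_G^T], so [B_L W B_S^T = (B_L W - X X^-1 B_L W) B_G^T = 0]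
   as soon as [X] is invertible.  [X] is a weighted Laplacian of the graph
   grounded at the generator nodes: [v X v^T = sum_k w_k ((v B_L)_k)^2], and if this
   vanishes the potential equal to [0] on generators and to [v] on loads has equal
   values at the ends of every edge, hence is constant on the connected graph,
   hence [v = 0].  With no generator at all, [B_S] is the empty matrix. *)

Lemma is_derive_0_is_cst_interval (R : realType) (f : R -> R) (I : set R) a b :
  is_interval I -> (forall t, I t -> is_derive t 1 f 0) -> I a -> I b ->
  f a = f b.
Proof.
move=> Iint df; wlog ab : a b / a <= b.
  move=> wlog_ab Ia Ib; have [/wlog_ab|/ltW ba] := leP a b; first exact.
  by rewrite (wlog_ab b a).
move=> Ia Ib.
have abI x : x \in `[a, b]%R -> I x by rewrite in_itv /= => xab; exact: (Iint a b).
have df' x : x \in `]a, b[%R -> is_derive x 1 f ((fun=> 0 : R) x).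
  by move=> xab; apply/df/abI; rewrite in_itv /= !ltW ?(itvP xab).
have fcont : {within `[a, b], continuous f}.
  apply: derivable_within_continuous => x /abI Ix.
  by have [] := df x Ix.
have [c _] := MVT_segment ab df' fcont.
by rewrite mul0r => /eqP; rewrite subr_eq0 => /eqP.
Qed.

Lemma Gammap_diag (R : realType) m (gamma : 'rV[R]_m) (eta : 'cV[R]_m) :
  Gammap gamma eta = diag_mx (\row_k (gamma 0 k * cos (eta k 0))).
Proof.
apply/matrixP => i j; rewrite /Gammap mul_mx_diag !mxE.
by case: eqVneq => [->|_]; rewrite ?mulr1n ?mulr0n ?mul0r.
Qed.

Lemma is_derive_mul_sinv (R : realType) p m (C : 'M[R]_(p, m))
    (gamma : 'rV[R]_m) (eta : R -> 'cV[R]_m) (deta : 'cV[R]_m) (t : R) j :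
  (forall k, is_derive t 1 (fun s => eta s k 0) (deta k 0)) ->
  is_derive t 1 (fun s => (C *m diag_mx gamma *m sinv (eta s)) j 0)
    ((C *m Gammap gamma (eta t) *m deta) j 0).
Proof.
move=> deta_k.
have entryE (D : 'M[R]_m) (x : 'cV[R]_m) :
    (C *m D *m x) j 0 = \sum_k (C *m D) j k * x k 0 by rewrite mxE.
under eq_fun do rewrite entryE.
have sinvE (x : 'cV[R]_m) k : sinv x k 0 = sin (x k 0) by rewrite mxE.
under eq_fun do under eq_bigr do rewrite sinvE.
rewrite entryE -fct_sumE.
have -> : \sum_k (C *m Gammap gamma (eta t)) j k * deta k 0
    = \sum_k (C *m diag_mx gamma) j k * (cos (eta t k 0) * deta k 0).
  apply: eq_bigr => k _.
  by rewrite Gammap_diag !mul_mx_diag !mxE; ring.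
exact: is_derive_sum.
Qed.

Lemma tr_B_S_annihilator (R : comUnitRingType) ng nl m (BG : 'M[R]_(ng, m))
    (BL : 'M[R]_(nl, m)) (W : 'M[R]_m) :
  W^T = W -> BL *m W *m BL^T \in unitmx ->
  BL *m W *m (BG *m (1%:M - W *m BL^T *m invmx (BL *m W *m BL^T) *m BL))^T = 0.
Proof.
move=> WT Xunit; set X := BL *m W *m BL^T.
have XT : X^T = X by rewrite /X !trmx_mul trmxK WT mulmxA.
rewrite trmx_mul linearB /= trmx1 !trmx_mul trmxK trmx_inv XT WT.
by rewrite !mulmxA mulmxBr mulmx1 !mulmxA -/X mulmxV // mul1mx subrr mul0mx.
Qed.

Lemma row_mul_incidence (R : pzRingType) n m (src tgt : 'I_m -> 'I_n)
    (y : 'rV[R]_n) k :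
  (y *m incidence R src tgt) 0 k = y 0 (src k) - y 0 (tgt k).
Proof.
have pick i0 : \sum_i y 0 i * (i == i0)%:R = y 0 i0.
  rewrite (bigD1 i0) //= eqxx mulr1 big1 ?addr0 // => i /negPf ->.
  by rewrite mulr0.
rewrite mxE; under eq_bigr do rewrite mxE mulrBr.
by rewrite sumrB !pick.
Qed.

Lemma incidence_ker_const (R : pzRingType) n m (src tgt : 'I_m -> 'I_n)
    (y : 'rV[R]_n) :
  (forall i j, connect (graph_adj src tgt) i j) ->
  y *m incidence R src tgt = 0 -> forall i j, y 0 i = y 0 j.
Proof.
move=> conn yB0.
have edge_eq e : y 0 (src e) = y 0 (tgt e).
  by apply/eqP; rewrite -subr_eq0 -row_mul_incidence yB0 mxE.
have adj_eq i j : graph_adj src tgt i j -> y 0 i = y 0 j.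
  by case/existsP => e /orP [] /andP [/eqP <- /eqP <-]; rewrite edge_eq.
move=> i j; have /connectP [p ip ->] := conn i j.
elim: p i ip => [|a p IHp] i //= /andP [ia ap].
by rewrite (adj_eq _ _ ia) IHp.
Qed.

Lemma quad_form_diag (R : comPzRingType) n m (A : 'M[R]_(n, m))
    (w : 'rV[R]_m) (v : 'rV[R]_n) :
  (v *m (A *m diag_mx w *m A^T) *m v^T) 0 0
  = \sum_k w 0 k * (v *m A) 0 k ^+ 2.
Proof.
rewrite !mulmxA -mulmxA -trmx_mul mul_mx_diag mxE.
by apply: eq_bigr => k _; rewrite !mxE; ring.
Qed.

Lemma grounded_laplacian_unitmx (R : realFieldType) g nl m
    (src tgt : 'I_m -> 'I_(g.+1 + nl)) (w : 'rV[R]_m) :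
  graph_connected src tgt -> (forall k, 0 < w 0 k) ->
  dsubmx (incidence R src tgt) *m diag_mx w *m (dsubmx (incidence R src tgt))^T
    \in unitmx.
Proof.
move=> [_ conn] wpos; set BL := dsubmx _; rewrite -row_free_unit; apply: inj_row_free => v vX0.
set z := v *m BL.
have z0 k : z 0 k = 0.
  have wz2_ge0 k' : predT k' -> 0 <= w 0 k' * z 0 k' ^+ 2.
    by rewrite mulr_ge0 ?sqr_ge0 ?ltW.
  have sum0 : \sum_k w 0 k * z 0 k ^+ 2 = 0.
    by rewrite -quad_form_diag vX0 mul0mx mxE.
  have /eqP := psumr_eq0P wz2_ge0 sum0 (i := k) isT.
  by rewrite mulf_eq0 gt_eqF //= sqrf_eq0 => /eqP.
pose y := row_mx (0 : 'rV[R]_g.+1) v.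
have yB0 : y *m incidence R src tgt = 0.
  rewrite -[incidence _ _ _]vsubmxK mul_row_col mul0mx add0r.
  by apply/rowP => k; rewrite z0 mxE.
apply/rowP => j; rewrite mxE -(row_mxEr (0 : 'rV[R]_g.+1) v).
by rewrite (incidence_ker_const conn yB0 _ (lshift nl ord0)) row_mxEl mxE.
Qed.

Lemma load_Gammap_B_S_tr (R : realType) ng nl m
    (src tgt : 'I_m -> 'I_(ng + nl)) (gamma : 'rV[R]_m) (eta : 'cV[R]_m) :
  graph_connected src tgt -> (forall k, 0 < gamma 0 k) -> in_Omega eta ->
  dsubmx (incidence R src tgt) *m Gammap gamma eta
    *m (B_S (usubmx (incidence R src tgt)) (dsubmx (incidence R src tgt))
          gamma eta)^T = 0.
Proof.
case: ng src tgt => [|g] src tgt conn gpos Om; first exact: thinmx0.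
apply: tr_B_S_annihilator; first by rewrite Gammap_diag tr_diag_mx.
rewrite Gammap_diag; apply: grounded_laplacian_unitmx => // k.
by rewrite mxE mulr_gt0 ?cos_gt0_pihalf.
Qed.

Theorem proposition3 (R : realType) (ng nl m : nat)
  (src tgt : 'I_m -> 'I_(ng + nl))
  (gamma : 'rV[R]_m) (Mv Av : 'rV[R]_ng) (u : 'cV[R]_ng)
  (I : set R) (eta : R -> 'cV[R]_m) (om dom : R -> 'cV[R]_ng) :
  graph_connected src tgt ->
  (forall k, 0 < gamma 0 k) -> (forall i, 0 < Mv 0 i) -> (forall i, 0 < Av 0 i) ->
  open I -> is_interval I -> I 0 ->
  in_Omega (eta 0) -> in_imBT (incidence R src tgt) (eta 0) ->
  (forall t, I t -> in_Omega (eta t)) ->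
  (forall t, I t -> forall k,
     is_derive t 1 (fun s => eta s k 0)
       (((B_S (usubmx (incidence R src tgt)) (dsubmx (incidence R src tgt))
            gamma (eta t))^T *m om t) k 0)) ->
  (forall t, I t -> forall i, is_derive t 1 (fun s => om s i 0) (dom t i 0)) ->
  (forall t, I t ->
     diag_mx Mv *m dom t
     = - (diag_mx Av *m om t)
       - usubmx (incidence R src tgt) *m diag_mx gamma *m sinv (eta t) + u) ->
  forall t, I t ->
    dsubmx (incidence R src tgt) *m diag_mx gamma *m sinv (eta t)
    = dsubmx (incidence R src tgt) *m diag_mx gamma *m sinv (eta 0).
Proof.
move=> conn gpos _ _ _ Iint I0 _ _ OmI deta _ _ t It.
apply/matrixP => j z; rewrite [z]ord1.
set BL := dsubmx _.
pose f s := (BL *m diag_mx gamma *m sinv (eta s)) j 0.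
apply: (@is_derive_0_is_cst_interval _ f _ _ _ Iint _ It I0) => s Is.
have := is_derive_mul_sinv BL gamma j (deta s Is).
rewrite mulmxA.
have -> := load_Gammap_B_S_tr conn gpos (OmI s Is).
by rewrite (mul0mx _ (om s)) mxE.
Qed.
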